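(* Let $n\ge3$, $K,H\le\mathbb{H}^\times$ finite with $[K,K]\le H\trianglelefteq K$, and let $P\le G_n(K,H)$ be a parabolic subgroup. Then there is a parabolic triple $(I_0,\Pi,\xi)$ with $P=P_{(I_0,\Pi,\xi)}$.
   Context: $\mathbb{H}$: quaternions. $A_n(K,H)$ is the group of diagonal matrices $\mathrm{diag}(k_1,\dots,k_n)$ with $k_i\in K$, $k_1\cdots k_n\in H$; $G_n(K,H)$ is the group generated by $A_n(K,H)$ and all $n\times n$ permutation matrices $M(\sigma)$, acting on $\mathbb{H}^n$ (column vectors, standard basis $e_1,\dots,e_n$) by left multiplication. A parabolic subgroup is the pointwise stabilizer in $G_n(K,H)$ of a subset of $\mathbb{H}^n$. A parabolic triple is $(I_0,\Pi,\xi)$ with $I_0\subseteq I=\{1,\dots,n\}$ (required empty if $K=\{1\}$), $\Pi=(I_1,\dots,I_d)$ a set partition of $I\setminus I_0$, and $\xi:I\setminus I_0\to K$. Let $D_\xi$ be the diagonal matrix with entry $\xi(j)$ for $j\notin I_0$ and $1$ for $j\in I_0$. Then $P_{(I_0,\Pi,\xi)}=P_0\times P_1\times\dots\times P_d$, where $P_0$ is $G_{|I_0|}(K,H)$ acting on the coordinates indexed by $I_0$ and trivially on the others (omitted if $I_0=\emptyset$), and $P_i=\{D_\xi M(\sigma)D_\xi^{-1}:\sigma\in\mathrm{Sym}(I_i)\}$ (the symmetric group permuting the vectors $\xi(j)e_j$, $j\in I_i$). *)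

From HB Require Import structures.
From mathcomp Require Import all_boot all_order all_algebra all_fingroup.
From mathcomp Require Import reals.
From mathcomp Require Import ring.
Set Implicit Arguments.
Unset Strict Implicit.
Unset Printing Implicit Defensive.
Import Order.TTheory GRing.Theory Num.Theory.
Local Open Scope ring_scope.

Record quat (R : Type) := Quat { qr : R; qi : R; qj : R; qk : R }.

Definition quat2tup (R : Type) (q : quat R) := (qr q, qi q, qj q, qk q).
Definition tup2quat (R : Type) (t : R * R * R * R) :=
  let: (a, b, c, d) := t in Quat a b c d.
Lemma quat2tupK (R : Type) : cancel (@quat2tup R) (@tup2quat R).
Proof. by case. Qed.

HB.instance Definition _ (R : eqType) := Equality.copy (quat R) (can_type (@quat2tupK R)).
HB.instance Definition _ (R : choiceType) := Choice.copy (quat R) (can_type (@quat2tupK R)).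

Definition qzero (R : comNzRingType) : quat R := Quat 0 0 0 0.
Definition qone (R : comNzRingType) : quat R := Quat 1 0 0 0.
Definition qopp (R : comNzRingType) (x : quat R) : quat R :=
  Quat (- qr x) (- qi x) (- qj x) (- qk x).
Definition qadd (R : comNzRingType) (x y : quat R) : quat R :=
  Quat (qr x + qr y) (qi x + qi y) (qj x + qj y) (qk x + qk y).
(* Hamilton product, i^2 = j^2 = k^2 = ijk = -1 *)
Definition qmul (R : comNzRingType) (x y : quat R) : quat R :=
  Quat (qr x * qr y - qi x * qi y - qj x * qj y - qk x * qk y)
       (qr x * qi y + qi x * qr y + qj x * qk y - qk x * qj y)
       (qr x * qj y - qi x * qk y + qj x * qr y + qk x * qi y)
       (qr x * qk y + qi x * qj y - qj x * qi y + qk x * qr y).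

Lemma qaddA (R : comNzRingType) : associative (@qadd R).
Proof. by case=> ? ? ? ?; case=> ? ? ? ?; case=> ? ? ? ?; rewrite /qadd /=; congr Quat; ring. Qed.
Lemma qaddC (R : comNzRingType) : commutative (@qadd R).
Proof. by case=> ? ? ? ?; case=> ? ? ? ?; rewrite /qadd /=; congr Quat; ring. Qed.
Lemma qadd0 (R : comNzRingType) : left_id (@qzero R) (@qadd R).
Proof. by case=> ? ? ? ?; rewrite /qadd /=; congr Quat; ring. Qed.
Lemma qaddN (R : comNzRingType) : left_inverse (@qzero R) (@qopp R) (@qadd R).
Proof. by case=> ? ? ? ?; rewrite /qadd /=; congr Quat; ring. Qed.

HB.instance Definition _ (R : comNzRingType) :=
  GRing.isZmodule.Build (quat R) (@qaddA R) (@qaddC R) (@qadd0 R) (@qaddN R).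

Lemma qmulA (R : comNzRingType) : associative (@qmul R).
Proof. by case=> ? ? ? ?; case=> ? ? ? ?; case=> ? ? ? ?; rewrite /qmul /=; congr Quat; ring. Qed.
Lemma qmul1 (R : comNzRingType) : left_id (@qone R) (@qmul R).
Proof. by case=> ? ? ? ?; rewrite /qmul /=; congr Quat; ring. Qed.
Lemma qmulr1 (R : comNzRingType) : right_id (@qone R) (@qmul R).
Proof. by case=> ? ? ? ?; rewrite /qmul /=; congr Quat; ring. Qed.
Lemma qmulDl' (R : comNzRingType) : left_distributive (@qmul R) (@qadd R).
Proof. by case=> ? ? ? ?; case=> ? ? ? ?; case=> ? ? ? ?; rewrite /qmul /= /qadd /=; congr Quat; ring. Qed.
Lemma qmulDr' (R : comNzRingType) : right_distributive (@qmul R) (@qadd R).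
Proof. by case=> ? ? ? ?; case=> ? ? ? ?; case=> ? ? ? ?; rewrite /qmul /= /qadd /=; congr Quat; ring. Qed.
Lemma qmulDl (R : comNzRingType) : left_distributive (@qmul R) +%R.
Proof. exact: qmulDl'. Qed.
Lemma qmulDr (R : comNzRingType) : right_distributive (@qmul R) +%R.
Proof. exact: qmulDr'. Qed.
Lemma qone_neq0 (R : comNzRingType) : @qone R != 0.
Proof. apply/eqP => -[] /eqP; by rewrite oner_eq0. Qed.

HB.instance Definition _ (R : comNzRingType) :=
  GRing.Zmodule_isNzRing.Build (quat R) (@qmulA R) (@qmul1 R) (@qmulr1 R)
    (@qmulDl R) (@qmulDr R) (@qone_neq0 R).

(* quaternion inverse  conj(q) / |q|^2  (used only for nonzero q) *)
Definition qinv (R : fieldType) (x : quat R) : quat R :=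
  let N := qr x ^+ 2 + qi x ^+ 2 + qj x ^+ 2 + qk x ^+ 2 in
  Quat (qr x / N) (- qi x / N) (- qj x / N) (- qk x / N).

Definition is_fin_subgroup (R : fieldType) (K : seq (quat R)) : Prop :=
  [/\ (0 : quat R) \notin K, (1 : quat R) \in K,
      {in K &, forall x y, x * y \in K} & {in K, forall x, qinv x \in K}].

(* [K,K] <= H : every commutator of K lies in H (H being a group) *)
Definition qcomm_sub (R : fieldType) (K H : seq (quat R)) : Prop :=
  {in K &, forall x y, x * y * qinv x * qinv y \in H}.

Definition qnormal_sub (R : fieldType) (H K : seq (quat R)) : Prop :=
  {subset H <= K} /\ {in K & H, forall k h, k * h * qinv k \in H}.

(* permutation matrix M(s) : M(s) e_j = e_{s j} *)
Definition Mperm (R : comNzRingType) n (s : 'S_n) : 'M[quat R]_n :=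
  \matrix_(i, j) (i == s j)%:R.
Arguments Mperm {R n} s.

Definition diagA (R : comNzRingType) n (A : {set 'I_n}) (d : 'I_n -> quat R) : 'M[quat R]_n :=
  diag_mx (\row_i (if i \in A then d i else 1)).

(* Generators of the group G_A(K,H) = G_{|A|}(K,H) acting on the coordinates
   indexed by A (identified with 1..|A| in increasing order) and trivially
   elsewhere: the elements of A_{|A|}(K,H) (product of the diagonal entries
   taken in increasing index order) and the permutation matrices of Sym(A). *)
Definition monomial_gen (R : fieldType) n (K H : seq (quat R)) (A : {set 'I_n})
    (g : 'M[quat R]_n) : Prop :=
  (exists d : 'I_n -> quat R,
      [/\ forall i, i \in A -> d i \in K,
          \prod_(i in A) d i \in H & g = diagA A d])
  \/ (exists s : 'S_n, perm_on A s /\ g = Mperm s).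

(* subgroup generated (closure under products; the generating set is closed
   under inverses, so this is the generated group) *)
Inductive gen_group (R : fieldType) n (S : 'M[quat R]_n -> Prop) : 'M[quat R]_n -> Prop :=
  | gen_one : gen_group S 1%:M
  | gen_mul g h : S g -> gen_group S h -> gen_group S (g *m h).

Definition G_on (R : fieldType) n (K H : seq (quat R)) (A : {set 'I_n}) :=
  gen_group (monomial_gen K H A).

Definition Gn (R : fieldType) n (K H : seq (quat R)) := G_on K H [set: 'I_n].

Definition pt_stab (R : fieldType) n (K H : seq (quat R)) (X : 'cV[quat R]_n -> Prop)
    (g : 'M[quat R]_n) : Prop :=
  Gn K H g /\ forall v, X v -> g *m v = v.

Definition parabolic (R : fieldType) n (K H : seq (quat R)) (P : 'M[quat R]_n -> Prop) : Prop :=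
  exists X : 'cV[quat R]_n -> Prop, forall g, P g <-> pt_stab K H X g.

Definition parabolic_triple (R : fieldType) n (K : seq (quat R)) (I0 : {set 'I_n})
    (Pi : {set {set 'I_n}}) (xi : 'I_n -> quat R) : Prop :=
  [/\ ((forall k, k \in K -> k = 1) -> I0 = set0),
      partition Pi (~: I0) &
      forall j, j \notin I0 -> xi j \in K].

Definition Dxi (R : fieldType) n (I0 : {set 'I_n}) (xi : 'I_n -> quat R) :=
  diagA (~: I0) xi.
Definition Dxi_inv (R : fieldType) n (I0 : {set 'I_n}) (xi : 'I_n -> quat R) :=
  diagA (~: I0) (fun j => qinv (xi j)).

(* P_(I0,Pi,xi) = P_0 x P_1 x ... x P_d, the (internal) product of
   P_0 = G_{I0}(K,H) and the P_i = { D_xi M(s) D_xi^-1 : s in Sym(I_i) } *)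
Definition P_triple (R : fieldType) n (K H : seq (quat R)) (I0 : {set 'I_n})
    (Pi : {set {set 'I_n}}) (xi : 'I_n -> quat R) (g : 'M[quat R]_n) : Prop :=
  exists g0 : 'M[quat R]_n, exists s : {set 'I_n} -> 'S_n,
    [/\ G_on K H I0 g0,
        forall B, B \in Pi -> perm_on B (s B) &
        g = g0 *m \prod_(B in Pi) (Dxi I0 xi *m Mperm (s B) *m Dxi_inv I0 xi)].

From HB Require Import structures.
From mathcomp Require Import all_boot all_order all_algebra all_fingroup.
From mathcomp Require Import reals boolp ring.
Set Implicit Arguments.
Unset Strict Implicit.
Unset Printing Implicit Defensive.
Import Order.TTheory GRing.Theory Num.Theory.
Local Open Scope ring_scope.

(* An element of G_n(K,H) is a monomial matrix: a permutation s with diagonal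
   factors d i in K whose product lies in H.  Call coordinates i, j of the fixed
   set X linked when v_i = k v_j on X for some k in K.  Take for I0 the
   coordinates vanishing on X, for Pi the linked classes of the others, and let
   xi j relate coordinate j to a fixed representative of its class.  A monomial
   matrix fixes X exactly when s preserves I0 and every class, and
   d i = xi i / xi (s^-1 i) off I0; this is the shape of P_(I0,Pi,xi).  The
   condition on the product of the d i over the classes holds automatically,
   because [K,K] <= H makes products in K commute modulo H. *)

Section QuatInverse.
Variable R : realType.
Implicit Types x y : quat R.

Lemma quat_norm_neq0 x : x != 0 ->
  qr x ^+ 2 + qi x ^+ 2 + qj x ^+ 2 + qk x ^+ 2 != 0.
Proof.
case: x => a b c d /=; apply: contraNneq => /eqP.
rewrite !paddr_eq0 ?addr_ge0 ?sqr_ge0 // !sqrf_eq0.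
by move=> /andP[/andP[/andP[/eqP-> /eqP->] /eqP->] /eqP->].
Qed.

Lemma qmulrV x : x != 0 -> x * qinv x = 1.
Proof.
move=> /quat_norm_neq0; case: x => a b c d /= N0.
change (qmul (Quat a b c d) (qinv (Quat a b c d)) = qone R).
by rewrite /qmul /qinv /qone /=; congr Quat; field.
Qed.

Lemma qmulVr x : x != 0 -> qinv x * x = 1.
Proof.
move=> /quat_norm_neq0; case: x => a b c d /= N0.
change (qmul (qinv (Quat a b c d)) (Quat a b c d) = qone R).
by rewrite /qmul /qinv /qone /=; congr Quat; field.
Qed.

Lemma qinv1 : qinv (1 : quat R) = 1.
Proof.
change (qinv (qone R) = qone R); rewrite /qinv /qone /=.
by congr Quat; rewrite ?oppr0 ?mul0r // expr1n !expr0n /= !addr0 divr1.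
Qed.

Lemma qmulrI x : x != 0 -> injective (fun y => x * y).
Proof. by move=> x0 y z /= e; rewrite -[y]mul1r -(qmulVr x0) -mulrA e mulrA qmulVr ?mul1r. Qed.

Lemma qmulIr x : x != 0 -> injective (fun y => y * x).
Proof. by move=> x0 y z /= e; rewrite -[y]mulr1 -(qmulrV x0) mulrA e -mulrA qmulrV ?mulr1. Qed.

End QuatInverse.

Section PermRestriction.
Local Open Scope group_scope.
Variable T : finType.
Implicit Types (B C : {set T}) (t : {perm T}) (x : T).

Lemma restr_perm_setT t : restr_perm [set: T] t = t.
Proof.
apply/permP => x; apply: restr_permE; rewrite ?in_setT //.
by apply/astabsP => y; rewrite !in_setT.
Qed.

Lemma restr_perm_set0 t : restr_perm set0 t = 1%g.
Proof. by apply/permP => x; rewrite perm1 (out_perm (restr_perm_on _ _)) ?inE. Qed.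

Lemma restr_permVE B t x : t \in 'N(B | 'P) -> x \in B ->
  (restr_perm B t)^-1%g x = (t^-1)%g x.
Proof. by move=> tB xB; rewrite -morphV // restr_permE ?groupV. Qed.

Lemma astabsU_perm B C t : t \in 'N(B | 'P) -> t \in 'N(C | 'P) -> t \in 'N(B :|: C | 'P).
Proof. by move=> tB tC; apply: (subsetP (astabsU _ _ _)); rewrite inE tB. Qed.

Lemma restr_permU B C t : [disjoint B & C] -> t \in 'N(B | 'P) -> t \in 'N(C | 'P) ->
  (restr_perm B t * restr_perm C t)%g = restr_perm (B :|: C) t.
Proof.
move=> BC tB tC; have tBC := astabsU_perm tB tC.
apply/permP => x; rewrite permM.
have [xB|xNB] := boolP (x \in B).
  have txB : t x \in B by rewrite -[t x]/(aperm x t) (astabs_act _ tB).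
  have txNC : t x \notin C by rewrite (disjointFr BC txB).
  rewrite [restr_perm B t x]restr_permE // (out_perm (restr_perm_on _ _) txNC).
  by rewrite restr_permE // inE xB.
rewrite (out_perm (restr_perm_on _ _) xNB).
have [xC|xNC] := boolP (x \in C); first by rewrite !restr_permE // inE xC orbT.
by rewrite !(out_perm (restr_perm_on _ _)) ?inE ?negb_or ?xNB.
Qed.

End PermRestriction.

Section MonomialMatrices.
Variables (R : comNzRingType) (n : nat).
Implicit Types (d e f : 'I_n -> quat R) (s t : 'S_n) (A : {set 'I_n}).

Definition monomial_mx d s : 'M[quat R]_n :=
  \matrix_(i, j) (if i == s j then d i else 0).

Lemma eq_monomial_mx d e s : d =1 e -> monomial_mx d s = monomial_mx e s.
Proof. by move=> de; apply/matrixP => i j; rewrite !mxE de. Qed.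

Lemma mul_monomial_mx d e s t :
  monomial_mx d s *m monomial_mx e t =
  monomial_mx (fun i => d i * e ((s^-1)%g i)) (t * s)%g.
Proof.
apply/matrixP => i k; rewrite !mxE (bigD1 (t k)) //= big1 => [|j /negbTE jk].
  by rewrite !mxE eqxx permM addr0; case: eqP => [->|_]; rewrite ?permK ?mul0r.
by rewrite !mxE jk mulr0.
Qed.

Lemma mul_monomial_mx_col d s (v : 'cV[quat R]_n) i :
  (monomial_mx d s *m v) i 0 = d i * v ((s^-1)%g i) 0.
Proof.
rewrite mxE (bigD1 ((s^-1)%g i)) //= big1 => [|j ji]; first by rewrite mxE permKV eqxx addr0.
rewrite mxE; case: eqP => [ij|_]; last by rewrite mul0r.
by move: ji; rewrite ij permK eqxx.
Qed.

Lemma monomial_mx1 : monomial_mx (fun=> 1) 1%g = 1%:M.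
Proof. by apply/matrixP => i j; rewrite !mxE perm1; case: eqP. Qed.

Lemma diagA_monomial A f :
  diagA A f = monomial_mx (fun i => if i \in A then f i else 1) 1%g.
Proof. by apply/matrixP => i j; rewrite !mxE perm1; case: eqP. Qed.

Lemma Mperm_monomial s : @Mperm R n s = monomial_mx (fun=> 1) s.
Proof. by apply/matrixP => i j; rewrite !mxE; case: eqP. Qed.

Lemma Mperm1 : @Mperm R n 1%g = 1%:M.
Proof. by rewrite Mperm_monomial monomial_mx1. Qed.

Lemma Mperm_mul s t : @Mperm R n s *m Mperm t = Mperm (t * s)%g.
Proof.
by rewrite !Mperm_monomial mul_monomial_mx; apply: eq_monomial_mx => i; rewrite mulr1.
Qed.

Lemma prod_Mperm_restr (t : 'S_n) (bs : seq {set 'I_n}) :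
  uniq bs -> {in bs &, forall B C : {set 'I_n}, B != C -> [disjoint B & C]} ->
  {in bs, forall B, t \in 'N(B | 'P)%g} ->
  \prod_(B <- bs) @Mperm R n (restr_perm B t) =
  Mperm (restr_perm (\bigcup_(B <- bs) B) t).
Proof.
elim: bs => [|B bs IH] /=; first by rewrite !big_nil restr_perm_set0 Mperm1.
case/andP=> Bbs uniq_bs disj tN; rewrite !big_cons.
have tNbs : {in bs, forall C, t \in 'N(C | 'P)%g} by move=> C Cbs; rewrite tN // inE Cbs orbT.
have tNU : t \in 'N(\bigcup_(C <- bs) C | 'P)%g.
  rewrite big_seq; apply: (big_ind (fun S => t \in 'N(S | 'P)%g)) => //.
  - by apply/astabsP => x; rewrite !inE.
  - by move=> C C'; exact: astabsU_perm.
have disjU : [disjoint \bigcup_(C <- bs) C & B].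
  rewrite disjoint_sym bigcup_seq; apply/bigcup_disjoint => C Cbs.
  by apply: disj; rewrite ?inE ?Cbs ?eqxx ?orbT //; apply: contraNneq Bbs => ->.
rewrite IH // => [|C C' Cbs C'bs]; last by apply: disj; rewrite inE ?Cbs ?C'bs orbT.
by rewrite [_ * _]Mperm_mul restr_permU // ?tN ?mem_head // setUC.
Qed.

End MonomialMatrices.

Section UnitDiagonal.
Variables (R : realType) (n : nat).
Implicit Types (f : 'I_n -> quat R) (t : 'S_n) (A : {set 'I_n}).

Lemma conj_Mperm_diagA A f t :
  let F i := if i \in A then f i else 1 in
  diagA A f *m Mperm t *m diagA A (fun i => qinv (f i)) =
  monomial_mx (fun i => F i * qinv (F ((t^-1)%g i))) t.
Proof.
rewrite !diagA_monomial Mperm_monomial !mul_monomial_mx mulg1 mul1g.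
by apply: eq_monomial_mx => i; rewrite mulr1; case: ifP; case: ifP; rewrite ?qinv1.
Qed.

Lemma mul_diagA_inv A f : {in A, forall i, f i != 0} ->
  diagA A f *m diagA A (fun i => qinv (f i)) = 1%:M /\
  diagA A (fun i => qinv (f i)) *m diagA A f = 1%:M.
Proof.
move=> f0; rewrite !diagA_monomial !mul_monomial_mx mulg1 -monomial_mx1.
split; apply: eq_monomial_mx => i; rewrite invg1 perm1;
  case: ifP => [iA|]; rewrite ?mulr1 // ?qmulrV ?qmulVr //; exact: f0.
Qed.

End UnitDiagonal.

Lemma gen_group_mulmx (R : fieldType) (n : nat) (S : 'M[quat R]_n -> Prop) g h :
  gen_group S g -> gen_group S h -> gen_group S (g *m h).
Proof.
elim=> [|a b Sa _ IH] Sh; first by rewrite mul1mx.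
by rewrite -mulmxA; exact: gen_mul Sa (IH Sh).
Qed.

Section MonomialGroup.
Variables (R : realType) (K H : seq (quat R)).
Hypotheses (K_group : is_fin_subgroup K) (H_group : is_fin_subgroup H)
  (comm_K_sub_H : qcomm_sub K H) (H_normal_K : qnormal_sub H K).

Lemma K1 : (1 : quat R) \in K. Proof. by case: K_group. Qed.
Lemma H1 : (1 : quat R) \in H. Proof. by case: H_group. Qed.
Lemma KM x y : x \in K -> y \in K -> x * y \in K.
Proof. by case: K_group => _ _ KM _; apply: KM. Qed.
Lemma HM x y : x \in H -> y \in H -> x * y \in H.
Proof. by case: H_group => _ _ HM _; apply: HM. Qed.
Lemma KV x : x \in K -> qinv x \in K. Proof. by case: K_group => _ _ _; apply. Qed.
Lemma HV x : x \in H -> qinv x \in H. Proof. by case: H_group => _ _ _; apply. Qed.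
Lemma K_neq0 x : x \in K -> x != 0.
Proof. by case: K_group => K0 _ _ _ xK; apply: contraNneq K0 => <-. Qed.
Lemma H_neq0 x : x \in H -> x != 0.
Proof. by case: H_group => H0 _ _ _ xH; apply: contraNneq H0 => <-. Qed.

Definition eqmodH x y := exists2 h, h \in H & x = h * y.

Lemma eqmodH_refl x : eqmodH x x.
Proof. by exists 1; rewrite ?mul1r ?H1. Qed.

Lemma eqmodH_sym x y : eqmodH x y -> eqmodH y x.
Proof. by case=> h hH ->; exists (qinv h); rewrite ?HV // mulrA qmulVr ?mul1r ?H_neq0. Qed.

Lemma eqmodH_trans x y z : eqmodH x y -> eqmodH y z -> eqmodH x z.
Proof. by case=> h hH -> [h' h'H ->]; exists (h * h'); rewrite ?HM ?mulrA. Qed.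

Lemma eqmodH1 x : eqmodH x 1 <-> x \in H.
Proof. by split=> [[h hH ->]|xH]; [rewrite mulr1 | exists x; rewrite ?mulr1]. Qed.

(* Normality of H moves the H-factor of y across x'. *)
Lemma eqmodH_mul x x' y y' : x' \in K ->
  eqmodH x x' -> eqmodH y y' -> eqmodH (x * y) (x' * y').
Proof.
move=> x'K [h hH ->] [h' h'H ->]; exists (h * (x' * h' * qinv x')).
  by apply: HM => //; case: H_normal_K => _; apply.
by rewrite !mulrA -[h * x' * h' * qinv x' * x']mulrA qmulVr ?mulr1 ?K_neq0.
Qed.

Lemma eqmodH_comm x y : x \in K -> y \in K -> eqmodH (x * y) (y * x).
Proof.
move=> xK yK; exists (x * y * qinv x * qinv y); first exact: comm_K_sub_H.
by rewrite -!mulrA [qinv y * (y * x)]mulrA qmulVr ?mul1r ?qmulVr ?mulr1 ?K_neq0.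
Qed.

Lemma prod_in_K (I : Type) (r : seq I) (f : I -> quat R) :
  (forall i, f i \in K) -> \prod_(i <- r) f i \in K.
Proof. by move=> fK; apply: (big_ind (fun x => x \in K)); [exact: K1 | exact: KM |]. Qed.

Lemma eqmodH_big_perm (I : eqType) (r r' : seq I) (f : I -> quat R) :
  (forall i, f i \in K) -> perm_eq r r' ->
  eqmodH (\prod_(i <- r) f i) (\prod_(i <- r') f i).
Proof.
move=> fK; elim: r r' => [|a r IH] r'.
  by rewrite perm_sym => /perm_nilP ->; apply: eqmodH_refl.
move=> rr'; have ar' : a \in r' by rewrite -(perm_mem rr') mem_head.
move: rr'; case/splitPr: ar' => r1 r2 rr'.
have rr12 : perm_eq r (r1 ++ r2).
  by rewrite -(perm_cons a); apply: perm_trans rr' _; rewrite -cat1s perm_catCA.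
rewrite big_cons big_cat big_cons /= mulrA.
apply: (@eqmodH_trans _ (f a * \prod_(i <- r1) f i * \prod_(i <- r2) f i)).
  by rewrite -mulrA -big_cat; apply: eqmodH_mul (eqmodH_refl _) (IH _ rr12).
apply: eqmodH_mul (eqmodH_refl _); first by rewrite KM ?prod_in_K.
exact: eqmodH_comm (prod_in_K _ fK).
Qed.

Lemma eqmodH_big_split (I : Type) (r : seq I) (f g : I -> quat R) :
  (forall i, f i \in K) -> (forall i, g i \in K) ->
  eqmodH (\prod_(i <- r) (f i * g i)) (\prod_(i <- r) f i * \prod_(i <- r) g i).
Proof.
move=> fK gK; elim: r => [|a r IH]; first by rewrite !big_nil mulr1; apply: eqmodH_refl.
rewrite !big_cons; apply: (eqmodH_trans (eqmodH_mul (KM (fK a) (gK a)) (eqmodH_refl _) IH)).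
rewrite -!mulrA; apply: eqmodH_mul (eqmodH_refl _) _ => //.
rewrite !mulrA; apply: eqmodH_mul (eqmodH_refl _); first by rewrite KM ?prod_in_K.
exact: eqmodH_comm (prod_in_K _ _).
Qed.

Lemma eqmodH_big_reindex (I : finType) (t : {perm I}) (f : I -> quat R) :
  (forall i, f i \in K) -> eqmodH (\prod_i f (t i)) (\prod_i f i).
Proof.
move=> fK; rewrite -(big_map t xpredT f); apply: eqmodH_big_perm => //.
apply: uniq_perm; rewrite ?map_inj_uniq ?index_enum_uniq //; first exact: perm_inj.
move=> i; rewrite mem_index_enum; apply/mapP.
by exists ((t^-1)%g i); rewrite ?mem_index_enum ?permKV.
Qed.

(* Since [K,K] <= H, the product depends modulo H only on the multiset of factors. *)
Lemma prod_mulV_perm_in_H (I : finType) (t : {perm I}) (f : I -> quat R) :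
  (forall i, f i \in K) -> \prod_i (f i * qinv (f (t i))) \in H.
Proof.
move=> fK; have fVK i : qinv (f i) \in K by exact: KV.
apply/eqmodH1; apply: (eqmodH_trans (eqmodH_big_split _ _ _)) => //.
apply: (@eqmodH_trans _ (\prod_i f i * \prod_i qinv (f i))).
  exact: eqmodH_mul (prod_in_K _ _) (eqmodH_refl _) (eqmodH_big_reindex _ _).
apply: (@eqmodH_trans _ (\prod_i (f i * qinv (f i)))).
  exact/eqmodH_sym/eqmodH_big_split.
rewrite big1 => [|i _]; first exact: eqmodH_refl.
by rewrite qmulrV ?K_neq0.
Qed.

Variable n : nat.
Implicit Types (A : {set 'I_n}) (d : 'I_n -> quat R) (s : 'S_n) (g : 'M[quat R]_n).

Lemma G_on_sub_Gn A g : G_on K H A g -> Gn K H g.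
Proof.
elim=> [|a b Sa _ IH]; first exact: gen_one.
apply: gen_mul IH; case: Sa => [[d [dK dH ->]]|[s [_ ->]]]; last first.
  by right; exists s; split => //; apply/subsetP => x; rewrite in_setT.
left; exists (fun i => if i \in A then d i else 1); split.
- by move=> i _; case: ifPn => [/dK|_]; last exact: K1.
- by rewrite (eq_bigl xpredT) => [|i]; rewrite ?in_setT // -big_mkcond.
- by rewrite !diagA_monomial; apply: eq_monomial_mx => i; rewrite in_setT.
Qed.

Lemma G_on_diagA_Mperm A d s :
  (forall i, i \in A -> d i \in K) -> \prod_(i in A) d i \in H -> perm_on A s ->
  G_on K H A (diagA A d *m Mperm s).
Proof.
move=> dK dH sA; apply: gen_mul; first by left; exists d.
by rewrite -[Mperm s]mulmx1; apply: gen_mul (gen_one _); right; exists s.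
Qed.

Lemma Gn_monomial d s :
  (forall i, d i \in K) -> \prod_i d i \in H -> Gn K H (monomial_mx d s).
Proof.
move=> dK dH; have -> : monomial_mx d s = diagA [set: 'I_n] d *m Mperm s.
  rewrite diagA_monomial Mperm_monomial mul_monomial_mx mulg1.
  by apply: eq_monomial_mx => i; rewrite in_setT mulr1.
apply: G_on_diagA_Mperm => //; first by rewrite (eq_bigl xpredT) // => i; rewrite in_setT.
by apply/subsetP => x; rewrite in_setT.
Qed.

Lemma G_on_monomial A g : G_on K H A g ->
  exists d s, [/\ forall i, d i \in K, forall i, i \notin A -> d i = 1,
    \prod_i d i \in H, perm_on A s & g = monomial_mx d s].
Proof.
elim=> [|a b Sa _ [d [s [dK dA dH sA ->]]]].
  exists (fun=> 1), 1%g; split; rewrite ?monomial_mx1 ?perm_on1 //.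
  - by move=> _; exact: K1.
  - by rewrite big1 // H1.
case: Sa => [[e [eK eH ->]]|[t [tA ->]]].
  pose e1 i := if i \in A then e i else 1.
  have e1K i : e1 i \in K by rewrite /e1; case: ifPn => [/eK|_]; last exact: K1.
  exists (fun i => e1 i * d i), s; split => //.
  - by move=> i; apply: KM.
  - by move=> i iA; rewrite /e1 (negbTE iA) mul1r dA.
  - apply/eqmodH1; apply: (eqmodH_trans (eqmodH_big_split _ _ _)) => //.
    have := eqmodH_mul K1 (iffRL (eqmodH1 _) _) (iffRL (eqmodH1 _) dH).
    by rewrite mulr1 -big_mkcond; apply.
  - rewrite diagA_monomial mul_monomial_mx mulg1.
    by apply: eq_monomial_mx => i; rewrite invg1 perm1.
exists (fun i => d ((t^-1)%g i)), (s * t)%g; split; rewrite ?perm_onM //.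
- by move=> i iA; rewrite (out_perm (perm_onV tA) iA) dA.
- by apply/eqmodH1; apply: eqmodH_trans (eqmodH_big_reindex _ _) (iffRL (eqmodH1 _) dH).
- by rewrite Mperm_monomial mul_monomial_mx; apply: eq_monomial_mx => i; rewrite mul1r.
Qed.



Section FixedSetTriple.
Variable X : 'cV[quat R]_n -> Prop.

Definition linked (i j : 'I_n) : bool :=
  `[< exists2 k, k \in K & forall v, X v -> v i 0 = k * v j 0 >].

Lemma linkedP i j :
  reflect (exists2 k, k \in K & forall v, X v -> v i 0 = k * v j 0) (linked i j).
Proof. exact: asboolP. Qed.

Lemma linked_refl i : linked i i.
Proof. by apply/linkedP; exists 1 => [|v _]; rewrite ?mul1r ?K1. Qed.

Lemma linked_sym i j : linked i j -> linked j i.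
Proof.
case/linkedP => k kK ij; apply/linkedP; exists (qinv k) => [|v Xv]; first exact: KV.
by rewrite ij // mulrA qmulVr ?mul1r ?K_neq0.
Qed.

Lemma linked_trans i j l : linked i j -> linked j l -> linked i l.
Proof.
case/linkedP => k kK ij /linkedP[k' k'K jl]; apply/linkedP.
by exists (k * k') => [|v Xv]; rewrite ?KM // ij // jl // mulrA.
Qed.

Lemma linked_equiv : equivalence_rel linked.
Proof.
move=> i j l; split=> [|ij]; first exact: linked_refl.
by apply/idP/idP; [apply: linked_trans (linked_sym ij) | apply: linked_trans ij].
Qed.

(* For K = 1 a parabolic triple must have I0 = set0; the coordinates vanishing
   on X then form a single linked class. *)
Definition K_trivial := all (eq_op^~ 1) K.

Definition stab_I0 : {set 'I_n} :=
  if K_trivial then set0 else [set j | `[< forall v, X v -> v j 0 = 0 >]].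

Definition stab_Pi := equivalence_partition linked (~: stab_I0).

Definition class_rep j := odflt j [pick i | linked j i].

Definition stab_xi j : quat R :=
  nth 1 K (find (fun k => `[< forall v, X v -> v j 0 = k * v (class_rep j) 0 >]) K).

Lemma linked_class_rep j : linked j (class_rep j).
Proof. by rewrite /class_rep; case: pickP => [//|_]; exact: linked_refl. Qed.

Lemma class_rep_eq i j : linked i j -> class_rep i = class_rep j.
Proof.
move=> ij; rewrite /class_rep (@eq_pick _ (linked i) (linked j)) => [|l].
  by case: pickP => // /(_ j); rewrite linked_refl.
exact: (linked_equiv i j l).2.
Qed.

Lemma stab_xiP j :
  stab_xi j \in K /\ forall v, X v -> v j 0 = stab_xi j * v (class_rep j) 0.
Proof.
pose p k := `[< forall v, X v -> v j 0 = k * v (class_rep j) 0 >].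
have hasK : has p K.
  by case/linkedP: (linked_class_rep j) => k kK jk; apply/hasP; exists k => //; exact/asboolP.
by split; [rewrite mem_nth // -has_find | exact/asboolP/(nth_find 1 hasK)].
Qed.

Lemma stab_xiK j : stab_xi j \in K. Proof. by case: (stab_xiP j). Qed.

Lemma stab_I0_vanish j v : j \in stab_I0 -> X v -> v j 0 = 0.
Proof. by rewrite /stab_I0; case: K_trivial; rewrite inE // => /asboolP; apply. Qed.

Lemma stab_I0_witness j : ~~ K_trivial -> j \notin stab_I0 -> exists2 v, X v & v j 0 != 0.
Proof.
rewrite /stab_I0 => /negbTE ->; rewrite inE => /asboolPn jNI0.
apply: contrapT => noW; apply: jNI0 => v Xv; apply: contrapT => vj0.
by apply: noW; exists v => //; apply/eqP.
Qed.

Lemma K_trivial_eq1 k : K_trivial -> k \in K -> k = 1.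
Proof. by move=> /allP Ktriv /Ktriv /eqP. Qed.

Lemma stab_Pi_partition : partition stab_Pi (~: stab_I0).
Proof. by apply: equivalence_partitionP => i j l _ _ _; exact: linked_equiv. Qed.

Lemma stab_Pi_block B : B \in stab_Pi ->
  {subset B <= ~: stab_I0} /\ {in B &, forall i j, linked i j}.
Proof.
case/imsetP => i _ ->; split=> [j|j l]; first by rewrite inE => /andP[].
by rewrite !inE => /andP[_ ij] /andP[_ il]; apply: linked_trans (linked_sym ij) il.
Qed.

Lemma stab_triple : parabolic_triple K stab_I0 stab_Pi stab_xi.
Proof.
split=> [K1triv||j _]; [|exact: stab_Pi_partition|exact: stab_xiK].
by rewrite /stab_I0 ifT //; apply/allP => k /K1triv ->.
Qed.

Lemma linked_stab_I0 i j : linked i j -> j \in stab_I0 -> i \in stab_I0.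
Proof.
rewrite /stab_I0; case: K_trivial; rewrite ?inE // => /linkedP[k _ ij] /asboolP j0.
by apply/asboolP => v Xv; rewrite ij // j0 // mulr0.
Qed.

Definition xi_entry j := if j \in ~: stab_I0 then stab_xi j else 1.

Lemma xi_entryK j : xi_entry j \in K.
Proof. by rewrite /xi_entry; case: ifP => _; [exact: stab_xiK | exact: K1]. Qed.

Lemma conj_Mperm_Dxi t :
  Dxi stab_I0 stab_xi *m Mperm t *m Dxi_inv stab_I0 stab_xi =
  monomial_mx (fun i => xi_entry i * qinv (xi_entry ((t^-1)%g i))) t.
Proof. exact: conj_Mperm_diagA. Qed.

Lemma conj_Mperm_Dxi_Gn t :
  Gn K H (Dxi stab_I0 stab_xi *m Mperm t *m Dxi_inv stab_I0 stab_xi).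
Proof.
rewrite conj_Mperm_Dxi; apply: Gn_monomial => [i|]; first by rewrite KM ?KV ?xi_entryK.
by apply: (prod_mulV_perm_in_H (t^-1)%g); exact: xi_entryK.
Qed.

Lemma conj_Mperm_Dxi_fix B t v : B \in stab_Pi -> perm_on B t -> X v ->
  (Dxi stab_I0 stab_xi *m Mperm t *m Dxi_inv stab_I0 stab_xi) *m v = v.
Proof.
move=> BPi tB Xv; have [BD Blinked] := stab_Pi_block BPi.
rewrite conj_Mperm_Dxi; apply/matrixP => i k; rewrite (ord1 k) mul_monomial_mx_col.
have [iB|iNB] := boolP (i \in B); last first.
  by rewrite (out_perm (perm_onV tB) iNB) qmulrV ?mul1r ?K_neq0 ?xi_entryK.
have jB : (t^-1)%g i \in B by rewrite (perm_closed _ (perm_onV tB)).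
rewrite /xi_entry (BD _ iB) (BD _ jB); case: (stab_xiP i) => _ ->//.
case: (stab_xiP ((t^-1)%g i)) => xiK ->//; rewrite (class_rep_eq (Blinked _ _ iB jB)).
by rewrite -mulrA [qinv _ * _]mulrA qmulVr ?mul1r ?K_neq0.
Qed.

Lemma G_on_stab_I0_fix g v : G_on K H stab_I0 g -> X v -> g *m v = v.
Proof.
move=> /G_on_monomial[d [s [_ dI0 _ sI0 ->]]] Xv.
apply/matrixP => i k; rewrite (ord1 k) mul_monomial_mx_col.
have [iI0|iNI0] := boolP (i \in stab_I0); last first.
  by rewrite dI0 // mul1r (out_perm (perm_onV sI0) iNI0).
by rewrite !(stab_I0_vanish _ Xv) ?mulr0 // (perm_closed _ (perm_onV sI0)).
Qed.

Lemma P_triple_fix g : P_triple K H stab_I0 stab_Pi stab_xi g ->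
  Gn K H g /\ forall v, X v -> g *m v = v.
Proof.
case=> g0 [s [g0G sB ->]]; split.
  apply: gen_group_mulmx (G_on_sub_Gn g0G) _.
  apply: (big_ind (Gn K H)) => [|M N|B _]; first exact: gen_one.
    exact: gen_group_mulmx.
  exact: conj_Mperm_Dxi_Gn.
move=> v Xv; rewrite -mulmxA [_ *m v](_ : _ = v) ?(G_on_stab_I0_fix g0G Xv) //.
apply: (big_ind (fun M : 'M_n => M *m v = v)) => [|M N Mv Nv|B BPi].
- exact: mul1mx.
- by rewrite -[M * N]/(M *m N) -mulmxA Nv Mv.
- exact: conj_Mperm_Dxi_fix (sB B BPi) Xv.
Qed.

Lemma prod_conj_Mperm_restr (t : 'S_n) : {in stab_Pi, forall B, t \in 'N(B | 'P)%g} ->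
  \prod_(B in stab_Pi)
     (Dxi stab_I0 stab_xi *m Mperm (restr_perm B t) *m Dxi_inv stab_I0 stab_xi) =
  Dxi stab_I0 stab_xi *m Mperm (restr_perm (~: stab_I0) t) *m Dxi_inv stab_I0 stab_xi.
Proof.
move=> tN; set D := Dxi _ _; set Dinv := Dxi_inv _ _.
have [DDinv DinvD] : D *m Dinv = 1%:M /\ Dinv *m D = 1%:M.
  by apply: mul_diagA_inv => i _; rewrite K_neq0 ?stab_xiK.
have conjM : {morph (fun M => D *m M *m Dinv) : M N / M * N}.
  move=> M N /=; rewrite -[M * N]/(M *m N) -[_ * _]/(_ *m _) !mulmxA.
  by rewrite -[D *m M *m Dinv *m D]mulmxA DinvD mulmx1.
have conj1 : D *m 1 *m Dinv = 1 by rewrite mulmx1 DDinv.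
rewrite -(big_morph _ conjM conj1) -big_filter prod_Mperm_restr.
- by rewrite big_filter -/(cover _) (cover_partition stab_Pi_partition).
- by rewrite filter_uniq ?index_enum_uniq.
- move=> B C; rewrite !mem_filter => /andP[BPi _] /andP[CPi _].
  exact: (trivIsetP (partition_trivIset stab_Pi_partition)).
- by move=> B; rewrite mem_filter => /andP[BPi _]; apply: tN.
Qed.

Section FixingMonomial.
Variables (d : 'I_n -> quat R) (s : 'S_n).
Hypotheses (dK : forall i, d i \in K) (dH : \prod_i d i \in H)
  (fixX : forall v, X v -> monomial_mx d s *m v = v).

Lemma fixX_coord v a : X v -> v (s a) 0 = d (s a) * v a 0.
Proof.
move=> Xv; have /matrixP/(_ (s a) 0) := fixX Xv.
by rewrite mul_monomial_mx_col permK => <-.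
Qed.

Lemma linked_perm a : linked (s a) a.
Proof. by apply/linkedP; exists (d (s a)) => // v; exact: fixX_coord. Qed.

Lemma stab_I0_perm : s \in 'N(stab_I0 | 'P)%g.
Proof.
apply/astabsP => a /=; rewrite /aperm /stab_I0; case: K_trivial; rewrite !inE //.
apply/asboolP/asboolP => a0 v Xv; last by rewrite fixX_coord // a0 // mulr0.
by apply: (qmulrI (K_neq0 (dK (s a)))); rewrite /= -fixX_coord // a0 // mulr0.
Qed.

Lemma mem_stab_I0_perm a : (s a \in stab_I0) = (a \in stab_I0).
Proof. exact: (astabs_act a stab_I0_perm). Qed.

Lemma mem_stab_I0_permV a : ((s^-1)%g a \in stab_I0) = (a \in stab_I0).
Proof. by rewrite -mem_stab_I0_perm permKV. Qed.

Lemma stab_Pi_perm B : B \in stab_Pi -> s \in 'N(B | 'P)%g.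
Proof.
case/imsetP => j _ ->; apply/astabsP => a /=; rewrite /aperm !inE mem_stab_I0_perm.
case: (a \in stab_I0) => //=; apply/idP/idP => ja.
  exact: linked_trans ja (linked_perm a).
exact: linked_trans ja (linked_sym (linked_perm a)).
Qed.

Lemma monomial_entry_off_I0 i : i \notin stab_I0 ->
  d i = stab_xi i * qinv (stab_xi ((s^-1)%g i)).
Proof.
move=> iNI0; set j := (s^-1)%g i.
have [Ktriv|KNtriv] := boolP K_trivial.
  by rewrite (K_trivial_eq1 Ktriv (dK i)) !(K_trivial_eq1 Ktriv (stab_xiK _)) qinv1 mulr1.
have ij : linked i j by have := linked_perm j; rewrite /j permKV.
have [v Xv v0] := stab_I0_witness KNtriv
  (contra (linked_stab_I0 (linked_class_rep i)) iNI0).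
have : stab_xi i * v (class_rep i) 0 = d i * stab_xi j * v (class_rep i) 0.
  case: (stab_xiP i) (stab_xiP j) => _ <- // [_ xij].
  by rewrite -mulrA (class_rep_eq ij) -xij // /j -{1 2}(permKV s i) fixX_coord.
by move/(qmulIr v0) ->; rewrite -mulrA qmulrV ?mulr1 ?K_neq0 ?stab_xiK.
Qed.

Lemma prod_stab_I0_in_H : \prod_(i in stab_I0) d i \in H.
Proof.
pose dI0 i := if i \in stab_I0 then d i else 1.
pose dD i := if i \in stab_I0 then 1 else d i.
have dI0K i : dI0 i \in K by rewrite /dI0; case: ifP => _; [exact: dK | exact: K1].
have dDK i : dD i \in K by rewrite /dD; case: ifP => _; [exact: K1 | exact: dK].
have dD_H : \prod_i dD i \in H.
  rewrite (eq_bigr (fun i => xi_entry i * qinv (xi_entry ((s^-1)%g i)))).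
    by apply: (prod_mulV_perm_in_H (s^-1)%g); exact: xi_entryK.
  move=> i _; rewrite /dD /xi_entry !inE mem_stab_I0_permV.
  by case: ifPn => iI0 /=; rewrite ?qinv1 ?mulr1 // monomial_entry_off_I0.
have d_split : \prod_i d i = \prod_i (dI0 i * dD i).
  by apply: eq_bigr => i _; rewrite /dI0 /dD; case: (i \in stab_I0); rewrite ?mulr1 ?mul1r.
have dI0_eqmodH : eqmodH (\prod_i dI0 i) (\prod_i d i).
  rewrite -[\prod_i dI0 i]mulr1 d_split; apply: eqmodH_sym.
  apply: eqmodH_trans (eqmodH_big_split _ _ _) _ => //.
  exact: eqmodH_mul (prod_in_K _ _) (eqmodH_refl _) (iffRL (eqmodH1 _) dD_H).
have /eqmodH1 := eqmodH_trans dI0_eqmodH (iffRL (eqmodH1 _) dH).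
by rewrite [in X in _ -> X]big_mkcond.
Qed.

Lemma monomial_mx_factor :
  monomial_mx d s = diagA stab_I0 d *m Mperm (restr_perm stab_I0 s) *m
    (Dxi stab_I0 stab_xi *m Mperm (restr_perm (~: stab_I0) s) *m Dxi_inv stab_I0 stab_xi).
Proof.
rewrite conj_Mperm_Dxi diagA_monomial Mperm_monomial !mul_monomial_mx mulg1.
have sN := stab_I0_perm; have sNC : s \in 'N(~: stab_I0 | 'P)%g by rewrite astabsC.
have disjI0 : [disjoint ~: stab_I0 & stab_I0] by rewrite disjoints_subset.
rewrite restr_permU // setUC setUCr restr_perm_setT.
apply: eq_monomial_mx => i; rewrite mulr1.
case: ifPn => [iI0|iNI0].
  rewrite restr_permVE // (out_perm (perm_onV (restr_perm_on _ _))); last first.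
    by rewrite inE negbK mem_stab_I0_permV.
  by rewrite /xi_entry !inE mem_stab_I0_permV iI0 /= qinv1 !mulr1.
rewrite mul1r (out_perm (perm_onV (restr_perm_on _ _)) iNI0).
rewrite (restr_permVE sNC) ?inE //.
by rewrite /xi_entry !inE iNI0 mem_stab_I0_permV iNI0 monomial_entry_off_I0.
Qed.

Lemma monomial_P_triple : P_triple K H stab_I0 stab_Pi stab_xi (monomial_mx d s).
Proof.
exists (diagA stab_I0 d *m Mperm (restr_perm stab_I0 s)), (fun B => restr_perm B s).
split; [|by move=> B _; exact: restr_perm_on|].
  by apply: G_on_diagA_Mperm; rewrite ?prod_stab_I0_in_H ?restr_perm_on.
by rewrite prod_conj_Mperm_restr ?monomial_mx_factor //; exact: stab_Pi_perm.
Qed.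

End FixingMonomial.

Lemma fix_P_triple g : Gn K H g -> (forall v, X v -> g *m v = v) ->
  P_triple K H stab_I0 stab_Pi stab_xi g.
Proof.
by move=> /G_on_monomial[d [s [dK _ dH _ ->]]] fixX; exact: monomial_P_triple.
Qed.

End FixedSetTriple.

End MonomialGroup.

Unset Implicit Arguments.
Set Strict Implicit.

Theorem proposition4p3 (R : realType) (n : nat) (K H : seq (quat R))
    (P : 'M[quat R]_n -> Prop) :
  (3 <= n)%N ->
  is_fin_subgroup K -> is_fin_subgroup H ->
  qcomm_sub K H -> qnormal_sub H K ->
  parabolic K H P ->
  exists (I0 : {set 'I_n}) (Pi : {set {set 'I_n}}) (xi : 'I_n -> quat R),
    parabolic_triple K I0 Pi xi /\
    forall g, P g <-> P_triple K H I0 Pi xi g.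
Proof.
move=> _ K_group H_group comm_K_sub_H H_normal_K [X P_stab].
exists (stab_I0 K X), (stab_Pi K X), (stab_xi K X).
split=> [|g]; first exact: stab_triple.
rewrite P_stab; split=> [[g_Gn g_fix]|]; first exact: fix_P_triple.
exact: P_triple_fix.
Qed.
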